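(* Let $R_{\rm d}$ and $R_{\rm o}$ be real skew-symmetric $n\times n$ matrices such that $R\equiv\sigma^0\otimes R_{\rm d}+\sigma^x\otimes R_{\rm o}=\begin{bmatrix}R_{\rm d}&R_{\rm o}\\R_{\rm o}&R_{\rm d}\end{bmatrix}$ is unitary and $\mathrm{Pf}\,R=-1$. Then $\det R_{\rm d}=0$.
   Context: $\sigma^0$ is the $2\times2$ identity, $\sigma^x=\begin{bmatrix}0&1\\1&0\end{bmatrix}$, and $\mathrm{Pf}$ denotes the Pfaffian. *)

From HB Require Import structures.
From mathcomp Require Import all_boot all_order all_algebra all_fingroup.
Set Implicit Arguments. Unset Strict Implicit. Unset Printing Implicit Defensive.
Import Order.TTheory GRing.Theory Num.Theory.
Local Open Scope ring_scope.

Lemma pf_idx_even_proof (m : nat) (i : 'I_m) : (i.*2 < m + m)%N.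
Proof. by rewrite addnn ltn_double. Qed.
Lemma pf_idx_odd_proof (m : nat) (i : 'I_m) : (i.*2.+1 < m + m)%N.
Proof. by rewrite addnn ltn_Sdouble. Qed.

Definition pf_even (m : nat) (i : 'I_m) : 'I_(m + m) := Ordinal (pf_idx_even_proof i).
Definition pf_odd (m : nat) (i : 'I_m) : 'I_(m + m) := Ordinal (pf_idx_odd_proof i).

Definition pfaffian (R : fieldType) (m : nat) (A : 'M[R]_(m + m)) : R :=
  ((2 ^ m * m`!)%N%:R)^-1 *
  \sum_(s : 'S_(m + m)) (-1) ^+ s * \prod_(i < m) A (s (pf_even i)) (s (pf_odd i)).

Definition skew_symmetric (R : pzRingType) (n : nat) (A : 'M[R]_n) : Prop :=
  A^T = - A.

From HB Require Import structures.
From mathcomp Require Import all_boot all_order all_algebra all_fingroup.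
From mathcomp Require Import ring complex.
Import Order.TTheory GRing.Theory Num.Theory.
Local Open Scope ring_scope.
Set Implicit Arguments. Unset Strict Implicit. Unset Printing Implicit Defensive.

(* Odd skew-symmetric matrices are singular, so let n = 2k and suppose that Rd
   is invertible.  Orthogonality of R and skew-symmetry of the blocks give
   Ro Ro = -1 - Rd Rd and Rd Ro = - Ro Rd, which make R = P^T diag(Rd, Rd) P
   with P = [[1, Rd^-1 Ro], [0, Rd^-1]].  As Pf (P^T C P) = det P * Pf C, this
   gives Pf R = det(Rd)^-1 * Pf diag(Rd, Rd) = 1, because Pf diag(A, A) = det A
   for every skew-symmetric A of even size.  The latter identity is checked
   over R[i]: for U = [[1, i], [i, 1]] one has U^T diag(A, A) U = 2i [[0, A],
   [A, 0]], and [[0, A], [A, 0]] is congruent to [[0, J], [J, 0]] through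
   diag(1, -J A), where J is the standard symplectic matrix.  Finally Pf J = 1:
   the Pfaffian sum only sees the skew part of a matrix, J / 2 is the skew part
   of the matrix E with ones at the positions (2i, 2i+1), and the Pfaffian sum
   of E counts the m! permutations moving these pairs as blocks, all even. *)

Section PairIndex.
Variable m : nat.
Local Notation N := (m + m)%N.

Lemma ord_half_proof (x : 'I_N) : (x./2 < m)%N.
Proof. by rewrite ltn_half_double -addnn. Qed.
Definition ord_half (x : 'I_N) : 'I_m := Ordinal (ord_half_proof x).

Lemma ord_half_even (i : 'I_m) : ord_half (pf_even i) = i.
Proof. exact/val_inj/doubleK. Qed.
Lemma ord_half_odd (i : 'I_m) : ord_half (pf_odd i) = i.
Proof. exact/val_inj/uphalf_double. Qed.
Lemma odd_pf_even (i : 'I_m) : odd (pf_even i) = false.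
Proof. exact: odd_double. Qed.
Lemma odd_pf_odd (i : 'I_m) : odd (pf_odd i) = true.
Proof. by rewrite /= odd_double. Qed.

Lemma pf_even_inj : injective (@pf_even m).
Proof. by move=> i j /(congr1 ord_half); rewrite !ord_half_even. Qed.
Lemma pf_odd_inj : injective (@pf_odd m).
Proof. by move=> i j /(congr1 ord_half); rewrite !ord_half_odd. Qed.
Lemma pf_even_neq_odd (i j : 'I_m) : pf_even i != pf_odd j.
Proof. by apply/eqP => /(congr1 (fun x : 'I_N => odd x)); rewrite odd_pf_even odd_pf_odd. Qed.

Lemma ord_pairE (x : 'I_N) :
  x = if odd x then pf_odd (ord_half x) else pf_even (ord_half x).
Proof. by apply: val_inj; case: (odd x) (odd_double_half x) => /= h; rewrite -{1}h. Qed.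

Lemma ord_pair_ind (P : 'I_N -> Prop) :
  (forall i, P (pf_even i)) -> (forall i, P (pf_odd i)) -> forall x, P x.
Proof. by move=> Pe Po x; rewrite (ord_pairE x); case: (odd x). Qed.

Lemma big_ord_pairs (R : Type) (idx : R) (op : Monoid.com_law idx) (G : 'I_N -> R) :
  \big[op/idx]_x G x = \big[op/idx]_(i < m) op (G (pf_even i)) (G (pf_odd i)).
Proof.
rewrite (partition_big ord_half xpredT) //=; apply: eq_bigr => i _.
rewrite (bigD1 (pf_even i)) ?ord_half_even //= (bigD1 (pf_odd i)) /=; last first.
  by rewrite ord_half_odd eqxx eq_sym pf_even_neq_odd.
rewrite big1 ?Monoid.mulm1 // => x /andP[/andP[/eqP <- x_neq_e] x_neq_o].
by move: x_neq_e x_neq_o; elim/ord_pair_ind: x => j; rewrite ?ord_half_even ?ord_half_odd eqxx.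
Qed.

Definition pair_swap (x : 'I_N) : 'I_N :=
  if odd x then pf_even (ord_half x) else pf_odd (ord_half x).

Lemma pair_swap_even (i : 'I_m) : pair_swap (pf_even i) = pf_odd i.
Proof. by rewrite /pair_swap odd_pf_even ord_half_even. Qed.
Lemma pair_swap_odd (i : 'I_m) : pair_swap (pf_odd i) = pf_even i.
Proof. by rewrite /pair_swap odd_pf_odd ord_half_odd. Qed.
Lemma pair_swapK : involutive pair_swap.
Proof.
by elim/ord_pair_ind => i; rewrite ?pair_swap_even ?pair_swap_odd ?pair_swap_even.
Qed.
Lemma odd_pair_swap x : odd (pair_swap x) = ~~ odd x.
Proof.
by elim/ord_pair_ind: x => i; rewrite ?pair_swap_even ?pair_swap_odd ?odd_pf_even ?odd_pf_odd.
Qed.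
Lemma val_pair_swap x : val (pair_swap x) = if odd x then (val x).-1 else (val x).+1.
Proof.
by elim/ord_pair_ind: x => i; rewrite ?pair_swap_even ?pair_swap_odd ?odd_pf_even ?odd_pf_odd.
Qed.

End PairIndex.

Lemma pair_swap_lshift m (x : 'I_(m + m)) :
  pair_swap (lshift (m + m) x) = lshift (m + m) (pair_swap x).
Proof. by apply: val_inj; rewrite /= !val_pair_swap. Qed.

Lemma odd_rshift_double m n (x : 'I_n) : odd (rshift (m + m) x) = odd x.
Proof. by rewrite /= oddD addnn odd_double. Qed.

Lemma pair_swap_rshift m (x : 'I_(m + m)) :
  pair_swap (rshift (m + m) x) = rshift (m + m) (pair_swap x).
Proof.
apply: val_inj; rewrite /= !val_pair_swap odd_rshift_double /=.
by elim/ord_pair_ind: x => i; rewrite ?odd_pf_even ?odd_pf_odd /= addnS.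
Qed.

Section PfSum.
Variable R : comPzRingType.
Variable m : nat.
Local Notation N := (m + m)%N.

Definition pf_sum (C : 'M[R]_N) : R :=
  \sum_(s : 'S_N) (-1) ^+ s * \prod_(i < m) C (s (pf_even i)) (s (pf_odd i)).

Lemma pf_sum_scale (a : R) (C : 'M[R]_N) : pf_sum (a *: C) = a ^+ m * pf_sum C.
Proof.
rewrite /pf_sum mulr_sumr; apply: eq_bigr => s _.
under eq_bigr do rewrite mxE.
by rewrite big_split /= prodr_const card_ord mulrCA.
Qed.

Lemma congr_mxE n p (M : 'M[R]_(n, p)) (C : 'M[R]_n) x y :
  (M^T *m C *m M) x y = \sum_(q : 'I_n * 'I_n) M q.1 x * C q.1 q.2 * M q.2 y.
Proof.
rewrite mxE; under eq_bigr do rewrite mxE big_distrl /=.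
by rewrite exchange_big pair_bigA; apply: eq_bigr => q _; rewrite mxE.
Qed.

Definition ffun_of_pairs (f : {ffun 'I_m -> 'I_N * 'I_N}) : {ffun 'I_N -> 'I_N} :=
  [ffun x : 'I_N => if odd x then (f (ord_half x)).2 else (f (ord_half x)).1].

Lemma ffun_of_pairs_even f i : ffun_of_pairs f (pf_even i) = (f i).1.
Proof. by rewrite ffunE odd_pf_even ord_half_even. Qed.
Lemma ffun_of_pairs_odd f i : ffun_of_pairs f (pf_odd i) = (f i).2.
Proof. by rewrite ffunE odd_pf_odd ord_half_odd. Qed.

Lemma ffun_of_pairs_bij : bijective ffun_of_pairs.
Proof.
exists (fun h : {ffun 'I_N -> 'I_N} => [ffun i => (h (pf_even i), h (pf_odd i))])
  => [f | h].
  by apply/ffunP => i; rewrite ffunE ffun_of_pairs_even ffun_of_pairs_odd -surjective_pairing.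
by apply/ffunP => x; rewrite ffunE !ffunE [in RHS](ord_pairE x); case: (odd x).
Qed.

(* Multilinear expansion: each slot of the Pfaffian sum of [M^T C M] picks a
   pair of row indices of [M], which [ffun_of_pairs] assembles into [h]. *)
Lemma pf_sum_congr_expand (M C : 'M[R]_N) :
  pf_sum (M^T *m C *m M) = \sum_(h : {ffun 'I_N -> 'I_N})
    (\prod_(i < m) C (h (pf_even i)) (h (pf_odd i))) * \det (rowsub h M).
Proof.
pose T (h : {ffun 'I_N -> 'I_N}) :=
  (\prod_(i < m) C (h (pf_even i)) (h (pf_odd i))) * \det (rowsub h M).
rewrite -/(\sum_h T h) (reindex _ (onW_bij _ ffun_of_pairs_bij)) /pf_sum.
have distr (s : 'S_N) : \prod_(i < m) (M^T *m C *m M) (s (pf_even i)) (s (pf_odd i)) =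
    \sum_(f : {ffun 'I_m -> 'I_N * 'I_N}) \prod_(i < m)
      (M (f i).1 (s (pf_even i)) * C (f i).1 (f i).2 * M (f i).2 (s (pf_odd i))).
  by under eq_bigr do rewrite congr_mxE; rewrite bigA_distr_bigA.
transitivity (\sum_(s : 'S_N) \sum_(f : {ffun 'I_m -> 'I_N * 'I_N}) (-1) ^+ s *
    \prod_(i < m) (M (f i).1 (s (pf_even i)) * C (f i).1 (f i).2 * M (f i).2 (s (pf_odd i)))).
  by apply: eq_bigr => s _; rewrite distr big_distrr.
rewrite exchange_big; apply: eq_bigr => f _.
rewrite /T /determinant big_distrr; apply: eq_bigr => s _ /=.
rewrite big_ord_pairs mulrCA; congr (_ * _).
rewrite -big_split /=; apply: eq_bigr => i _.
by rewrite !mxE ffun_of_pairs_even ffun_of_pairs_odd; ring.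
Qed.

Lemma pf_sum_congr (M C : 'M[R]_N) : pf_sum (M^T *m C *m M) = \det M * pf_sum C.
Proof.
rewrite pf_sum_congr_expand (bigID (fun h : {ffun 'I_N -> 'I_N} => injectiveb h)) /=.
rewrite [X in _ + X]big1 ?addr0 => [|h /injectivePn[x1 [x2 x12 hx12]]]; last first.
  by rewrite (determinant_alternate x12) ?mulr0 // => y; rewrite !mxE hx12.
rewrite (reindex (@pval _)) /=; last first.
  by exists (insubd (1%g : 'S_N)) => /= f f_inj; first apply: val_inj; apply: insubdK.
rewrite /pf_sum big_distrr; apply: eq_big => [s | s _]; first exact: (valP s).
have -> : rowsub (pval s) M = row_perm s M by apply/matrixP => x y; rewrite !mxE pvalE.
have -> : \prod_(i < m) C (pval s (pf_even i)) (pval s (pf_odd i)) =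
           \prod_(i < m) C (s (pf_even i)) (s (pf_odd i)).
  by apply: eq_bigr => i _; rewrite -!pvalE.
by rewrite row_permE det_mulmx det_perm /= mulrC mulrA (mulrC (_ ^+ _)).
Qed.

End PfSum.

Lemma pfaffianE (F : fieldType) m (C : 'M[F]_(m + m)) :
  pfaffian C = ((2 ^ m * m`!)%N%:R)^-1 * pf_sum C.
Proof. by []. Qed.

Lemma pfaffian_congr (F : fieldType) m (M C : 'M[F]_(m + m)) :
  pfaffian (M^T *m C *m M) = \det M * pfaffian C.
Proof. by rewrite !pfaffianE pf_sum_congr mulrCA. Qed.

Lemma pfaffian_scale (F : fieldType) m (a : F) (C : 'M[F]_(m + m)) :
  pfaffian (a *: C) = a ^+ m * pfaffian C.
Proof. by rewrite !pfaffianE pf_sum_scale mulrCA. Qed.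

Lemma pfaffian_map (F F' : fieldType) (f : {rmorphism F -> F'}) m (C : 'M[F]_(m + m)) :
  pfaffian (map_mx f C) = f (pfaffian C).
Proof.
rewrite !pfaffianE [RHS]rmorphM fmorphV rmorph_nat rmorph_sum; congr (_ * _).
apply: eq_bigr => s _; rewrite rmorphM rmorph_sign rmorph_prod; congr (_ * _).
by apply: eq_bigr => i _; rewrite mxE.
Qed.


Section PfSumSymmetricPart.
Variable R : idomainType.
Variable m : nat.
Local Notation N := (m + m)%N.
Hypothesis two_neq0 : (2 : R) != 0.

(* Composing with the transposition of the two entries of slot [k] flips the
   sign of each term but not the (symmetric) factor in that slot. *)
Lemma pf_sum_sym_slot (S : 'M[R]_N) (k : 'I_m) (G : 'I_m -> 'M[R]_N) : S^T = S ->
  \sum_(s : 'S_N) (-1) ^+ s * (S (s (pf_even k)) (s (pf_odd k)) *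
     \prod_(i < m | i != k) G i (s (pf_even i)) (s (pf_odd i))) = 0.
Proof.
move=> S_sym; set X := \sum_s _.
have X_opp : X = - X.
  rewrite {1}/X (reindex_inj (mulgI (tperm (pf_even k) (pf_odd k)))) -sumrN.
  apply: eq_bigr => s _.
  rewrite odd_permM odd_tperm pf_even_neq_odd signrN mulNr; congr (- (_ * _)).
  rewrite !permM tpermL tpermR -[in LHS]S_sym mxE; congr (_ * _).
  apply: eq_bigr => i i_neq_k; rewrite !permM !tpermD //.
  - by rewrite pf_even_neq_odd.
  - by apply: contra i_neq_k => /eqP/pf_odd_inj ->.
  - by apply: contra i_neq_k => /eqP/pf_even_inj ->.
  - by rewrite eq_sym pf_even_neq_odd.
have /eqP : X * 2 = 0 by rewrite mulrDr mulr1 {1}X_opp addNr.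
by rewrite mulf_eq0 (negbTE two_neq0) orbF => /eqP.
Qed.

Lemma pf_sum_add_sym (K S : 'M[R]_N) : S^T = S -> pf_sum (K + S) = pf_sum K.
Proof.
move=> S_sym.
pose G k (i : 'I_m) := if (i < k)%N then K else K + S.
pose P k := \sum_(s : 'S_N) (-1) ^+ s * \prod_(i < m) G k i (s (pf_even i)) (s (pf_odd i)).
have <- : P m = pf_sum K.
  by apply: eq_bigr => s _; congr (_ * _); apply: eq_bigr => i _; rewrite /G ltn_ord.
suff P_const k : (k <= m)%N -> P k = P 0%N by rewrite P_const.
elim: k => [//|k IHk] lt_k_m; rewrite -IHk; last exact: ltnW.
pose k0 := Ordinal lt_k_m.
have G_off i : i != k0 -> G k.+1 i = G k i.
  by rewrite -val_eqE => /negbTE i_neq_k; rewrite /G ltnS leq_eqVlt i_neq_k.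
have [G_k1 G_k] : G k.+1 k0 = K /\ G k k0 = K + S by rewrite /G ltnSn ltnn.
rewrite /P; under eq_bigr => s _ do rewrite (bigD1 k0) //= G_k1.
under [RHS]eq_bigr => s _ do rewrite (bigD1 k0) //= G_k mxE mulrDl mulrDr.
rewrite big_split /= (pf_sum_sym_slot k0 (G k) S_sym) addr0.
apply: eq_bigr => s _; congr (_ * (_ * _)); by apply: eq_bigr => i /G_off ->.
Qed.

End PfSumSymmetricPart.

Section PairPermutations.
Variable m : nat.
Local Notation N := (m + m)%N.

Definition swap_pairs : 'S_N := perm (can_inj (@pair_swapK m)).

Definition even_slots_fun (t : 'S_m) (x : 'I_N) : 'I_N :=
  if odd x then x else pf_even (t (ord_half x)).

Lemma even_slots_fun_even t i : even_slots_fun t (pf_even i) = pf_even (t i).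
Proof. by rewrite /even_slots_fun odd_pf_even ord_half_even. Qed.
Lemma even_slots_fun_odd t i : even_slots_fun t (pf_odd i) = pf_odd i.
Proof. by rewrite /even_slots_fun odd_pf_odd. Qed.

Lemma even_slots_fun_inj t : injective (even_slots_fun t).
Proof.
elim/ord_pair_ind => i; elim/ord_pair_ind => j;
  rewrite ?even_slots_fun_even ?even_slots_fun_odd.
- by move/pf_even_inj/perm_inj ->.
- by move/eqP; rewrite (negbTE (pf_even_neq_odd _ _)).
- by move/eqP; rewrite eq_sym (negbTE (pf_even_neq_odd _ _)).
- by [].
Qed.

(* [pair_perm t] moves the pair (2i, 2i+1) onto (2 t(i), 2 t(i)+1); written as
   a permutation of the even slots times its conjugate by [swap_pairs], which
   acts on the odd slots, it is visibly even. *)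
Definition pair_perm (t : 'S_m) : 'S_N :=
  let e := perm (@even_slots_fun_inj t) in (e * e ^ swap_pairs)%g.

Lemma pair_perm_even t i : pair_perm t (pf_even i) = pf_even (t i).
Proof.
rewrite /pair_perm permM (permE _ (pf_even i)) even_slots_fun_even.
have -> : pf_even (t i) = swap_pairs (pf_odd (t i)) by rewrite permE pair_swap_odd.
by rewrite permJ !permE even_slots_fun_odd.
Qed.
Lemma pair_perm_odd t i : pair_perm t (pf_odd i) = pf_odd (t i).
Proof.
rewrite /pair_perm permM (permE _ (pf_odd i)) even_slots_fun_odd.
have -> : pf_odd i = swap_pairs (pf_even i) by rewrite permE pair_swap_even.
by rewrite permJ !permE even_slots_fun_even pair_swap_even.
Qed.

Lemma odd_pair_perm t : odd_perm (pair_perm t) = false.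
Proof. by rewrite odd_permM odd_permJ addbb. Qed.

Lemma pair_perm_inj : injective pair_perm.
Proof. by move=> t1 t2 eq_t; apply/permP => i; apply: pf_even_inj; rewrite -!pair_perm_even eq_t. Qed.

Definition pairs_preserved (s : 'S_N) :=
  [forall i, ~~ odd (s (pf_even i)) && (s (pf_odd i) == pair_swap (s (pf_even i)))].

Lemma pairs_preservedE s : pairs_preserved s = (s \in [set pair_perm t | t in setT]).
Proof.
apply/forallP/imsetP => [s_pairs | [t _ ->] i]; last first.
  by rewrite pair_perm_even pair_perm_odd odd_pf_even pair_swap_even eqxx.
have s_even i : s (pf_even i) = pf_even (ord_half (s (pf_even i))).
  by case/andP: (s_pairs i) => /negbTE s_ev _; rewrite {1}(ord_pairE (s _)) s_ev.
have t_inj : injective (fun i => ord_half (s (pf_even i))).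
  by move=> i j eq_ij; apply/pf_even_inj/(@perm_inj _ s); rewrite s_even eq_ij -s_even.
exists (perm t_inj) => //; apply/permP; elim/ord_pair_ind => i.
  by rewrite pair_perm_even permE -s_even.
by case/andP: (s_pairs i) => _ /eqP ->; rewrite pair_perm_odd permE s_even pair_swap_even -s_even.
Qed.

Definition pair_mx (R : pzRingType) : 'M[R]_N :=
  \matrix_(x, y) (~~ odd x && (y == pair_swap x))%:R.

Lemma pf_sum_pair_mx (R : comPzRingType) : pf_sum (pair_mx R) = m`!%:R.
Proof.
rewrite /pf_sum (bigID pairs_preserved) /= [X in _ + X]big1 ?addr0 => [|s]; last first.
  case/forallPn => i not_pair; rewrite (bigD1 i) //= mxE (negbTE not_pair).
  by rewrite mul0r mulr0.
rewrite (eq_bigl _ _ pairs_preservedE) big_imset /=; last by move=> ? ? _ _; apply: pair_perm_inj.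
under eq_bigr => t _.
  rewrite odd_pair_perm mul1r big1 => [|i _]; last first.
    by rewrite mxE pair_perm_even pair_perm_odd odd_pf_even pair_swap_even eqxx.
over.
by rewrite sumr_const cardsT card_Sn.
Qed.

End PairPermutations.

Section Symplectic.
Variable F : fieldType.

Definition symplectic_mx m : 'M[F]_(m + m) := pair_mx m F - (pair_mx m F)^T.

Lemma symplectic_mxE m (x y : 'I_(m + m)) :
  symplectic_mx m x y = (-1) ^+ odd x *+ (y == pair_swap x).
Proof.
rewrite !mxE; elim/ord_pair_ind: x => i; elim/ord_pair_ind: y => j;
  rewrite ?pair_swap_even ?pair_swap_odd ?odd_pf_even ?odd_pf_odd /=.
- by rewrite !(negbTE (pf_even_neq_odd _ _)) subr0.
- by rewrite subr0 (inj_eq (@pf_odd_inj m)).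
- by rewrite (inj_eq (@pf_odd_inj m)) (inj_eq (@pf_even_inj m)) eq_sym sub0r expr1 mulNrn.
- by rewrite eq_sym (negbTE (pf_even_neq_odd _ _)) subr0.
Qed.

Lemma tr_symplectic_mx m : (symplectic_mx m)^T = - symplectic_mx m.
Proof. by rewrite linearB /= trmxK opprB. Qed.

Lemma symplectic_mx_sqr m : symplectic_mx m *m symplectic_mx m = - 1%:M.
Proof.
apply/matrixP => x z; rewrite !mxE (bigD1 (pair_swap x)) //= big1 ?addr0 => [|y y_neq]; last first.
  by rewrite symplectic_mxE (negbTE y_neq) mulr0n mul0r.
rewrite !symplectic_mxE eqxx pair_swapK odd_pair_swap eq_sym mulr1n.
by case: (odd x); rewrite /= ?expr0 ?expr1 ?mulN1r ?mul1r ?mulNrn.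
Qed.

Lemma block_symplectic_mx m :
  block_mx (symplectic_mx m) 0 0 (symplectic_mx m) = symplectic_mx (m + m).
Proof.
apply/matrixP => x y; rewrite symplectic_mxE.
case: (split_ordP x) => x' ->; case: (split_ordP y) => y' ->;
  rewrite ?block_mxEul ?block_mxEur ?block_mxEdl ?block_mxEdr ?symplectic_mxE ?mxE;
  rewrite ?pair_swap_lshift ?pair_swap_rshift ?eq_lshift ?eq_rshift ?eq_lrshift ?eq_rlshift //=.
by rewrite odd_rshift_double.
Qed.

Section CharacteristicZero.
Hypothesis F_char0 : [pchar F] =i pred0.

Lemma natf_neq0_char0 n : (n%:R != 0 :> F) = (0 < n)%N.
Proof. by rewrite (pcharf0P _).1 // lt0n. Qed.

Lemma pf_sum_symplectic_mx m : pf_sum (symplectic_mx m) = (2 ^ m * m`!)%N%:R.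
Proof.
have two_neq0 : (2 : F) != 0 by rewrite natf_neq0_char0.
set E := pair_mx m F.
have E_split : E = 2^-1 *: symplectic_mx m + 2^-1 *: (E + E^T).
  by apply/matrixP => x y; rewrite !mxE; field.
have sym_part : (2^-1 *: (E + E^T))^T = 2^-1 *: (E + E^T).
  by rewrite linearZ /= linearD /= trmxK addrC.
rewrite natrM natrX; have := pf_sum_pair_mx m F.
rewrite -/E E_split pf_sum_add_sym // pf_sum_scale => <-.
by rewrite mulrA exprVn mulfV ?mul1r // expf_neq0.
Qed.

Lemma pfaffian_symplectic_mx m : pfaffian (symplectic_mx m) = 1.
Proof.
by rewrite pfaffianE pf_sum_symplectic_mx mulVf // natf_neq0_char0 muln_gt0 expn_gt0 fact_gt0.
Qed.

Lemma det_symplectic_mx m : \det (symplectic_mx m) = 1.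
Proof.
have := pfaffian_congr (symplectic_mx m) (symplectic_mx m).
rewrite tr_symplectic_mx mulNmx symplectic_mx_sqr opprK mul1mx pfaffian_symplectic_mx.
by rewrite mulr1.
Qed.

End CharacteristicZero.
End Symplectic.

Section BlockCongruences.
Variable R : comPzRingType.
Variable n : nat.

Definition antidiag_block (B : 'M[R]_n) : 'M[R]_(n + n) := block_mx 0 B B 0.

Definition mix_mx (ii : R) : 'M[R]_(n + n) := block_mx 1%:M ii%:M ii%:M 1%:M.

Lemma mix_mx_congr (ii : R) (B : 'M[R]_n) : ii * ii = -1 ->
  (mix_mx ii)^T *m block_mx B 0 0 B *m mix_mx ii = (ii *+ 2) *: antidiag_block B.
Proof.
move=> ii_sqr; rewrite /mix_mx /antidiag_block tr_block_mx !tr_scalar_mx !mulmx_block.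
rewrite !(mul0mx, mulmx0, addr0, add0r, mul1mx, mulmx1, mul_scalar_mx, mul_mx_scalar).
rewrite !scalerA ii_sqr !scaleN1r addrN addNr.
by rewrite scale_block_mx !scaler0 -scalerMnl mulr2n.
Qed.

Lemma antidiag_block_congr (K A : 'M[R]_n) :
  K^T = - K -> K *m K = - 1%:M -> A^T = - A ->
  let Q := block_mx 1%:M 0 0 (- (K *m A)) in
  Q^T *m antidiag_block K *m Q = antidiag_block A.
Proof.
move=> skewK KK skewA Q; rewrite /Q /antidiag_block tr_block_mx !trmx0 tr_scalar_mx.
rewrite linearN /= trmx_mul skewK skewA !mulmx_block.
rewrite !(mul0mx, mulmx0, addr0, add0r, mul1mx, mulmx1).
rewrite mulmxN mulmxA KK !mulNmx !mulmxN !opprK mul1mx.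
by rewrite mulNmx -mulmxA KK mulmxN mulmx1 opprK.
Qed.

End BlockCongruences.

Lemma det_mix_mx_neq0 (F : fieldType) (ii : F) n : (2 : F) != 0 -> ii * ii = -1 ->
  \det (mix_mx n ii) != 0.
Proof.
move=> two_neq0 ii_sqr.
have : mix_mx n ii *m mix_mx n (- ii) = 2%:M.
  rewrite /mix_mx !mulmx_block !mul1mx !mulmx1 -!scalar_mxM mulrN ii_sqr opprK.
  by rewrite -!raddfD /= addrN addNr !raddf0 -(scalar_mx_block n n).
move/(congr1 determinant); rewrite det_mulmx det_scalar => det_prod.
apply/eqP => det0; move/esym/eqP: det_prod; rewrite det0 mul0r.
by rewrite expf_eq0 (negbTE two_neq0) andbF.
Qed.

Lemma pfaffian_block_diag_skew (F : fieldType) (ii : F) k (A : 'M[F]_(k + k)) :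
  [pchar F] =i pred0 -> ii * ii = -1 -> A^T = - A ->
  pfaffian (block_mx A 0 0 A : 'M_((k + k) + (k + k))) = \det A.
Proof.
move=> F_char0 ii_sqr skewA.
have two_neq0 : (2 : F) != 0 by rewrite natf_neq0_char0.
set J := symplectic_mx F k.
set U := mix_mx (k + k) ii.
have mix (B : 'M[F]_(k + k)) :
   \det U * pfaffian (block_mx B 0 0 B) = (ii *+ 2) ^+ (k + k) * pfaffian (antidiag_block B).
  by rewrite -pfaffian_congr mix_mx_congr // pfaffian_scale.
have antidiag_A : pfaffian (antidiag_block A) = \det A * pfaffian (antidiag_block J).
  rewrite -(antidiag_block_congr (tr_symplectic_mx F k) (symplectic_mx_sqr F k) skewA).
  rewrite pfaffian_congr det_ublock det1 mul1r -scaleN1r detZ det_mulmx.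
  have even_kk : odd (k + k) = false by rewrite addnn odd_double.
  by rewrite det_symplectic_mx // -signr_odd even_kk expr0 !mul1r.
apply: (mulfI (det_mix_mx_neq0 k.*2 two_neq0 ii_sqr)).
rewrite -addnn mix antidiag_A mulrCA -mix block_symplectic_mx pfaffian_symplectic_mx //.
by rewrite mulr1 mulrC.
Qed.

Lemma pfaffian_block_diag_skew_real (R : realFieldType) k (A : 'M[R]_(k + k)) :
  A^T = - A -> pfaffian (block_mx A 0 0 A : 'M_((k + k) + (k + k))) = \det A.
Proof.
move=> skewA; apply: (fmorph_inj (real_complex R)).
rewrite -pfaffian_map -det_map_mx map_block_mx !map_mx0.
apply: (@pfaffian_block_diag_skew _ 'i%C).
- by move=> p; rewrite (fmorph_pchar (real_complex R)) pchar_num.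
- by apply/eqP; rewrite eq_complex /= !(mul0r, mulr0, mul1r) sub0r add0r oppr0 !eqxx.
- by rewrite -map_mxN -skewA; apply/matrixP => i j; rewrite !mxE.
Qed.

Lemma orthogonal_skew_block (R : pzRingType) n (A B : 'M[R]_n) :
  A^T = - A -> B^T = - B -> block_mx A B B A *m (block_mx A B B A)^T = 1%:M ->
  B *m B = - 1%:M - A *m A /\ A *m B = - (B *m A).
Proof.
move=> skewA skewB; rewrite tr_block_mx skewA skewB mulmx_block (scalar_mx_block n n).
case/eq_block_mx => AA_BB AB_BA _ _; split.
  by rewrite -AA_BB !mulmxN opprD !opprK addrC addKr.
by apply/eqP; rewrite -subr_eq0 opprK -[X in X == _]opprK opprD -!mulmxN AB_BA oppr0.
Qed.

Lemma skew_block_congr (R : comUnitRingType) n (A B : 'M[R]_n) :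
  A \in unitmx -> A^T = - A -> B^T = - B ->
  B *m B = - 1%:M - A *m A -> A *m B = - (B *m A) ->
  let P := block_mx 1%:M (invmx A *m B) 0 (invmx A) in
  P^T *m block_mx A 0 0 A *m P = block_mx A B B A.
Proof.
move=> A_unit skewA skewB BB AB P.
have AAi := mulmxV A_unit; have AiA := mulVmx A_unit.
set Ai := invmx A in P AAi AiA *.
have skewAi : Ai^T = - Ai.
  have AiTA : Ai^T *m A = - 1%:M.
    by rewrite -[A]opprK -skewA mulmxN -trmx_mul AAi trmx1.
  by rewrite -[Ai^T]mulmx1 -AAi mulmxA AiTA mulNmx mul1mx.
have BAi : B *m Ai = - (Ai *m B).
  have := congr1 (fun X => Ai *m X *m Ai) AB.
  rewrite /= !mulmxA AiA mul1mx => ->.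
  by rewrite mulmxN mulNmx !mulmxA -(mulmxA _ A) AAi mulmx1.
rewrite /P tr_block_mx trmx0 tr_scalar_mx trmx_mul skewB skewAi !mulmx_block.
rewrite !(mul0mx, mulmx0, addr0, add0r, mul1mx, mulmx1).
have BAiA : - B *m - Ai *m A = B by rewrite mulNmx mulmxN opprK -mulmxA AiA mulmx1.
rewrite BAiA mulmxA AAi mul1mx !mulNmx AiA mul1mx mulmxA BAi mulNmx -mulmxA BB.
by rewrite mulmxBr mulmxN mulmx1 mulmxA AiA mul1mx opprB opprK addrK.
Qed.

Lemma pfaffian_skew_orthogonal_block (R : realFieldType) k (A B : 'M[R]_(k + k)) :
  A^T = - A -> B^T = - B -> block_mx A B B A *m (block_mx A B B A)^T = 1%:M ->
  \det A != 0 -> pfaffian (block_mx A B B A) = 1.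
Proof.
move=> skewA skewB /(orthogonal_skew_block skewA skewB)[BB AB] detA_neq0.
have A_unit : A \in unitmx by rewrite unitmxE unitfE.
rewrite -(skew_block_congr A_unit skewA skewB BB AB) pfaffian_congr.
by rewrite pfaffian_block_diag_skew_real // det_ublock det1 mul1r -det_mulmx mulVmx ?det1.
Qed.

Lemma det_skew_odd (R : numDomainType) n (A : 'M[R]_n) : A^T = - A -> odd n -> \det A = 0.
Proof.
move=> skewA odd_n.
have : \det A = - \det A by rewrite -{1}det_tr skewA -scaleN1r detZ -signr_odd odd_n mulN1r.
by move/eqP; rewrite -addr_eq0 -mulr2n mulrn_eq0 => /eqP.
Qed.

Theorem theorem4 (R : realFieldType) (n : nat) (Rd Ro : 'M[R]_n) :
  skew_symmetric Rd -> skew_symmetric Ro ->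
  (block_mx Rd Ro Ro Rd) *m (block_mx Rd Ro Ro Rd)^T = 1%:M ->
  pfaffian (block_mx Rd Ro Ro Rd) = -1 ->
  \det Rd = 0.
Proof.
rewrite /skew_symmetric => skewRd skewRo orthR pfR.
have [odd_n | even_n] := boolP (odd n); first exact: det_skew_odd.
have n_half : n = (n./2 + n./2)%N by rewrite addnn -[LHS]odd_double_half (negbTE even_n).
move: (n./2) n_half => k n_k; subst n.
apply/eqP; apply: contraT => detRd_neq0.
move: pfR; rewrite pfaffian_skew_orthogonal_block // => /eqP.
by rewrite -addr_eq0 -mulr2n mulrn_eq0 oner_eq0.
Qed.
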